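(* Let $1\le r\le s$ and let $H$ be a fixed $s$-uniform hypergraph with at least $s$ vertices. Then $\tau^{(r)}(H)\ge n^{\,r-1/\mu^{(r)}(H)}$; that is, for every strategy and every $t=t(n)=o(n^{\,r-1/\mu^{(r)}(H)})$, a.a.s. $G^{(r,s)}_t$ does not contain a copy of $H$.
   Context: Semi-random hypergraph process: fix integers $1\le r\le s$ and $n\ge s$. Start with the empty $s$-uniform multi-hypergraph $G_0^{(r,s)}$ on vertex set $[n]$. In each step $t\ge1$, a set $U_t$ of $r$ vertices is chosen uniformly at random among all $r$-subsets of $[n]$, independently of all previous choices; the player then chooses a set $V_t$ of $s-r$ vertices of $[n]\setminus U_t$ (when $r=s$, $V_t=\emptyset$), and the edge $U_t\cup V_t$ is added to form $G^{(r,s)}_t$ (parallel edges allowed). A strategy is, for each $n$, a sequence of functions determining $V_t$ from $(U_1,V_1,\dots,U_{t-1},V_{t-1},U_t)$. A.a.s. means with probability tending to $1$ as $n\to\infty$. ''Contains $H$'' means has a sub-hypergraph isomorphic to $H$. ''$\tau^{(r)}(H)\ge f$'' means for every strategy and every $t=o(f(n))$, a.a.s. $G^{(r,s)}_t$ does not contain $H$. For an $s$-graph $H$ write $v_H=|V(H)|$, $e_H=|E(H)|$, $f^{(r)}(H)=\frac{e_H}{v_H-s+r}$ and $\mu^{(r)}(H)=\max\{f^{(r)}(H'):\ H'\subseteq H,\ v_{H'}\ge s\}$, the maximum over sub-hypergraphs $H'$ of $H$ with at least $s$ vertices. *)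

From HB Require Import structures.
From mathcomp Require Import all_boot all_order all_algebra.
From mathcomp Require Import all_classical all_reals all_analysis.
Set Implicit Arguments. Unset Strict Implicit. Unset Printing Implicit Defensive.
Import Order.TTheory GRing.Theory Num.Theory.
Import numFieldNormedType.Exports.
Local Open Scope ring_scope.

Definition uniform (s v : nat) (E : {set {set 'I_v}}) : Prop :=
  forall e, e \in E -> #|e| = s.

Definition fr (R : realType) (r s : nat) (v : nat)
  (W : {set 'I_v}) (F : {set {set 'I_v}}) : R :=
  #|F|%:R / ((#|W| - s + r)%N)%:R.

Definition subhg (v : nat) (E : {set {set 'I_v}}) (W : {set 'I_v}) (F : {set {set 'I_v}}) : bool :=
  (F \subset E) && [forall e in F, e \subset W].

(* mu^{(r)}(H) = max of f^{(r)}(H') over sub-hypergraphs H' with at least s vertices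
   (all values are >= 0, and the index set is nonempty when v >= s). *)
Definition mu (R : realType) (r s v : nat) (E : {set {set 'I_v}}) : R :=
  \big[Num.max/0]_(W : {set 'I_v} | (s <= #|W|)%N)
    \big[Num.max/0]_(F : {set {set 'I_v}} | subhg E W F) fr R r s W F.

(* A strategy: for each n, a function from the history ((U_1,V_1),...,(U_{t-1},V_{t-1}))
   and the current random set U_t to the chosen set V_t. *)
Definition strategy := forall n : nat, seq ({set 'I_n} * {set 'I_n}) -> {set 'I_n} -> {set 'I_n}.

Definition valid_strategy (r s : nat) (st : strategy) : Prop :=
  forall n, (s <= n)%N -> forall hist (U : {set 'I_n}), #|U| = r ->
    #|st n hist U| = (s - r)%N /\ [disjoint U & st n hist U].

Definition run (st : strategy) (n : nat) (us : seq {set 'I_n}) : seq ({set 'I_n} * {set 'I_n}) :=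
  foldl (fun hist U => rcons hist (U, st n hist U)) [::] us.

Definition edges (st : strategy) (n : nat) (us : seq {set 'I_n}) : seq {set 'I_n} :=
  map (fun p => p.1 :|: p.2) (@run st n us).

(* G contains a copy of the (simple) hypergraph H = ('I_v, E): an injective vertex map
   sending every edge of H to an edge of G (distinct edges of H go to distinct edges of G
   by injectivity). *)
Definition contains (v n : nat) (E : {set {set 'I_v}}) (G : seq {set 'I_n}) : bool :=
  [exists f : {ffun 'I_v -> 'I_n}, injectiveb f && [forall e in E, (f @: e) \in G]].

(* Probability that G_t does not contain H: U_1..U_t i.i.d. uniform r-subsets of [n]. *)
Definition prob_avoid (R : realType) (r : nat) (st : strategy) (v : nat)
  (E : {set {set 'I_v}}) (n t : nat) : R :=
  #|[set us : t.-tuple {set 'I_n} |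
       [forall i : 'I_t, #|tnth us i| == r] && ~~ contains E (@edges st n us)]|%:R
  / (('C(n, r) ^ t)%N)%:R.

Local Open Scope classical_set_scope.
Definition tau_ge (R : realType) (r s v : nat) (E : {set {set 'I_v}}) (f : nat -> R) : Prop :=
  forall st : strategy, valid_strategy r s st ->
  forall t : nat -> nat,
    (fun n => (t n)%:R / f n) @ \oo --> (0 : R) ->
    (fun n => prob_avoid R r st E n (t n)) @ \oo --> (1 : R).

From HB Require Import structures.
From mathcomp Require Import all_boot all_order all_algebra zify.

(* Let (W, F) be a sub-hypergraph of H attaining mu = |F| / d, where
   d = |W| - s + r, and let m = |F|.  If G_t contains H, it contains a copy of
   (W, F) whose m edges are first added at some steps i in I.  Adding them in
   that order, the union has at most |W| vertices, so the random r-sets U_i,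
   i in I, must meet the earlier edges of the copy in at least
   K = s + r m - r - |W| >= r m - d vertices in total.  Weight every step by
   n ^ |U_i :&: earlier edges|: whatever the strategy does, the average weight
   of a step is O(1), hence n ^ K P[G_t contains H] <= O('C(t, m)) and
   P[G_t contains H] = O((t / n ^ (r - d / m)) ^ m) = O((t / n ^ (r - 1 / mu)) ^ m). *)

Set Implicit Arguments.
Unset Strict Implicit.
Unset Printing Implicit Defensive.

Lemma big_tuple_cons (X : finType) t (F : seq X -> nat) :
  \sum_(us : t.+1.-tuple X) F us = \sum_(x : X) \sum_(us : t.-tuple X) F (x :: us).
Proof.
rewrite pair_big /= (reindex (fun p : X * t.-tuple X => [tuple of p.1 :: p.2])) /=.
  by apply: eq_bigr => -[x u].
apply: onW_bij; exists (fun us : t.+1.-tuple X => (thead us, [tuple of behead us])).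
  by move=> [x u] /=; congr pair; apply: val_inj.
by move=> us; case/tupleP: us => x u; apply: val_inj.
Qed.

(* The weight of a draw may depend on all earlier draws, as the choices of a strategy do. *)
Lemma sum_prod_adapted_le (X : finType) (x0 : X) (w : nat -> seq X -> X -> nat)
    (c : nat -> nat) :
  (forall i p, \sum_(x : X) w i p x <= c i) ->
  forall t p, \sum_(us : t.-tuple X)
     \prod_(i < t) w (size p + i) (p ++ take i us) (nth x0 us i)
   <= \prod_(i < t) c (size p + i).
Proof.
move=> hw; elim=> [|t IH] p.
  rewrite big_ord0 (eq_bigr (fun _ => 1)); last by move=> i _; rewrite big_ord0.
  by rewrite sum1_card card_tuple.
rewrite (big_tuple_cons t (fun us : seq X => \prod_(i < t.+1)
  w (size p + i) (p ++ take i us) (nth x0 us i))) big_ord_recl addn0.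
apply: (@leq_trans (\sum_(x : X) w (size p) p x *
                      \prod_(i < t) c (size p + bump 0 i))); last first.
  by rewrite -big_distrl /= leq_mul2r hw orbT.
apply: leq_sum => x _.
rewrite (eq_bigr (fun us : t.-tuple X => w (size p) p x * \prod_(i < t)
  w (size (rcons p x) + i) (rcons p x ++ take i us) (nth x0 us i))); last first.
  move=> us _; rewrite big_ord_recl addn0 take0 cats0 /=; congr (_ * _).
  by apply: eq_bigr => i _; rewrite size_rcons /bump add1n addnS -cats1 -catA.
rewrite -big_distrr /= leq_mul2l; apply/orP; right.
have := IH (rcons p x); rewrite size_rcons.
by congr (_ <= _); apply: eq_bigr => i _; rewrite /bump add1n addnS.
Qed.

Lemma sum_tuple_prod (X : finType) (x0 : X) (g : X -> nat) t :
  \sum_(us : t.-tuple X) \prod_(i < t) g (nth x0 us i) = (\sum_(x : X) g x) ^ t.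
Proof.
elim: t => [|t IH].
  rewrite expn0 (eq_bigr (fun _ => 1)); last by move=> i _; rewrite big_ord0.
  by rewrite sum1_card card_tuple.
rewrite (big_tuple_cons t (fun us : seq X => \prod_(i < t.+1) g (nth x0 us i))).
rewrite expnS big_distrl /=; apply: eq_bigr => x _.
by rewrite -IH big_distrr /=; apply: eq_bigr => us _; rewrite big_ord_recl.
Qed.

Lemma prodn_bool (I : finType) (b : pred I) : \prod_(i : I) (b i : nat) = [forall i, b i].
Proof.
have [/forallP h|/forallPn [i hi]] := boolP [forall i, b i].
  by rewrite big1 // => i _; rewrite h.
by rewrite (bigD1 i) //= (negPf hi) mul0n.
Qed.

Lemma card_tuples_of_card n r t :
  #|[set us : t.-tuple {set 'I_n} | [forall i : 'I_t, #|tnth us i| == r]]| = 'C(n, r) ^ t.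
Proof.
rewrite -sum1dep_card big_mkcond /=.
rewrite (eq_bigr (fun us : t.-tuple {set 'I_n} =>
  \prod_(i < t) (#|nth set0 us i| == r : nat))); last first.
  move=> us _; rewrite prodn_bool.
  have -> : [forall i : 'I_t, #|nth set0 us i| == r] = [forall i : 'I_t, #|tnth us i| == r].
    by apply: eq_forallb => i; rewrite (tnth_nth set0).
  by case: ifP.
rewrite (sum_tuple_prod set0 (fun U : {set 'I_n} => (#|U| == r : nat))).
have -> : \sum_(U : {set 'I_n}) (#|U| == r : nat) = #|[set U : {set 'I_n} | #|U| == r]|.
  by rewrite -sum1dep_card [RHS]big_mkcond.
by rewrite card_draws card_ord.
Qed.

Lemma card_predI_predC (T : finType) (A B : pred T) :
  #|[set x | A x && ~~ B x]| + #|[set x | A x && B x]| = #|[set x | A x]|.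
Proof.
rewrite -!sum1dep_card [X in X + _]big_mkcond [X in _ + X]big_mkcond.
by rewrite [RHS]big_mkcond -big_split /=; apply: eq_bigr => x _; case: (A x); case: (B x).
Qed.

Lemma bin_le_expn t m : 'C(t, m) <= t ^ m.
Proof.
apply: (@leq_trans ('C(t, m) * m`!)); first by rewrite leq_pmulr ?fact_gt0.
rewrite bin_ffact ffact_prod; apply: (@leq_trans (\prod_(i < m) t)).
  by apply: leq_prod => i _; apply: leq_subr.
by rewrite prod_nat_const card_ord.
Qed.

Lemma expn_bin_subn_le n r b : b <= r -> r <= n ->
  n ^ b * 'C(n - b, r - b) <= r ^ b * 'C(n, r).
Proof.
move=> + rn; elim: b => [|b IH] br; first by rewrite !expn0 !subn0.
have step : n * 'C(n - b.+1, r - b.+1) <= r * 'C(n - b, r - b).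
  have e := mul_bin_diag (n - b) (r - b.+1).
  have e1 : (n - b).-1 = n - b.+1 by lia.
  have e2 : (r - b.+1).+1 = r - b by lia.
  rewrite e1 e2 in e.
  have nb_gt0 : 0 < n - b by lia.
  rewrite -(leq_pmul2l nb_gt0) mulnCA e mulnA [X in _ <= X]mulnA leq_mul2r.
  have : n * (r - b) <= r * (n - b).
    by rewrite !mulnBr [r * n]mulnC leq_sub2l // leq_mul2r rn orbT.
  by rewrite [r * _]mulnC => ->; rewrite orbT.
rewrite expnS -mulnA; apply: (@leq_trans (n ^ b * (r * 'C(n - b, r - b)))).
  by rewrite mulnCA leq_mul2l step orbT.
by rewrite mulnCA expnS -mulnA leq_mul2l IH ?orbT // ltnW.
Qed.

Lemma card_supersets_le n (B : {set 'I_n}) r :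
  #|[set U : {set 'I_n} | (#|U| == r) && (B \subset U)]| <= 'C(n - #|B|, r - #|B|).
Proof.
have -> : n - #|B| = #|~: B| by have := cardsC B; rewrite card_ord; lia.
rewrite -cards_draws -(@card_in_imset _ _ (fun U => U :\: B)); last first.
  move=> U1 U2; rewrite !inE => /andP[_ h1] /andP[_ h2] e.
  apply/setP => x; have [xB|xB] := boolP (x \in B).
    by rewrite (subsetP h1 _ xB) (subsetP h2 _ xB).
  by move/setP: e => /(_ x); rewrite !inE xB.
apply/subset_leq_card/subsetP => X /imsetP[U]; rewrite inE => /andP[/eqP hU hB] ->.
rewrite inE; apply/andP; split; first by rewrite setDE subsetIr.
by rewrite cardsD (setIidPr hB) hU.
Qed.

Lemma exists_subset_card (T : finType) (X : {set T}) b : b <= #|X| ->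
  exists B : {set T}, (B \subset X) && (#|B| == b).
Proof.
move=> hb; have : 0 < #|[set A : {set T} | (A \subset X) && (#|A| == b)]|.
  by rewrite cards_draws bin_gt0.
by case/card_gt0P => B; rewrite inE => h; exists B.
Qed.

Lemma sum_card_rsets_overlap_le n r (O : {set 'I_n}) b :
  \sum_(U : {set 'I_n}) (#|U| == r) * (b <= #|U :&: O|)
  <= \sum_(B : {set 'I_n} | (B \subset O) && (#|B| == b))
        #|[set U : {set 'I_n} | (#|U| == r) && (B \subset U)]|.
Proof.
under [X in _ <= X]eq_bigr => B _ do rewrite -sum1_card.
rewrite (exchange_big_dep xpredT) //=; apply: leq_sum => U _.
case: eqP => hU; rewrite ?mul0n // mul1n.
case hb: (b <= #|U :&: O|) => //.
have [B /andP[BUO /eqP Bb]] := exists_subset_card hb.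
rewrite (bigD1 B) /= ?leq_addr // Bb eqxx inE hU eqxx.
by rewrite !(subset_trans BUO) ?subsetIl ?subsetIr.
Qed.

(* Since [|U :&: O| <= r], a term [n ^ |U :&: O|] is split as a sum over the
   sizes [b] of subsets of [U :&: O], and each [b]-subset [B] of [O] lies in
   few [r]-sets. *)
Lemma sum_expn_card_setI_le n r (O : {set 'I_n}) : r <= n ->
  \sum_(U : {set 'I_n}) (#|U| == r) * n ^ #|U :&: O|
   <= (r.+1 * 2 ^ #|O| * r ^ r) * 'C(n, r).
Proof.
move=> rn.
apply: (@leq_trans (\sum_(U : {set 'I_n})
   \sum_(b < r.+1) n ^ b * ((#|U| == r) * (b <= #|U :&: O|)))).
  apply: leq_sum => U _; case: eqP => hU //; rewrite mul1n.
  have UOr : #|U :&: O| < r.+1 by rewrite ltnS -hU subset_leq_card ?subsetIl.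
  by rewrite (bigD1 (Ordinal UOr)) //= leqnn !muln1 leq_addr.
have -> : r.+1 * 2 ^ #|O| * r ^ r * 'C(n, r) = \sum_(b < r.+1) (2 ^ #|O| * r ^ r * 'C(n, r)).
  by rewrite sum_nat_const card_ord !mulnA.
rewrite exchange_big /=.
apply: leq_sum => b _; rewrite -big_distrr /=.
have br : b <= r by rewrite -ltnS.
apply: (@leq_trans (n ^ b * \sum_(B : {set 'I_n} | (B \subset O) && (#|B| == b))
        #|[set U : {set 'I_n} | (#|U| == r) && (B \subset U)]|)).
  by rewrite leq_mul2l sum_card_rsets_overlap_le orbT.
rewrite big_distrr /=.
apply: (@leq_trans (\sum_(B : {set 'I_n} | (B \subset O) && (#|B| == b)) r ^ b * 'C(n, r))).
  apply: leq_sum => B /andP[_ /eqP Bb].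
  apply: (@leq_trans (n ^ b * 'C(n - b, r - b))); last exact: expn_bin_subn_le.
  by rewrite leq_mul2l -Bb card_supersets_le orbT.
have rbr : r ^ b <= r ^ r.
  move: (b : nat) br => k.
  by case: (posnP r) => [-> | r_gt0 kr]; [rewrite leqn0 => /eqP -> | rewrite leq_pexp2l].
rewrite big_const iter_addn addn0 mulnC mulnA leq_mul2r; apply/orP; right.
apply: leq_mul rbr; rewrite -card_powerset subset_leq_card //.
by apply/subsetP => A; rewrite !inE => /andP[].
Qed.

Section Run.
Variables (st : strategy) (n : nat).
Arguments st : clear implicits.

Lemma run_rcons (us : seq {set 'I_n}) U :
  run st (rcons us U) = rcons (run st us) (U, st n (run st us) U).
Proof. by rewrite /run foldl_rcons. Qed.

Lemma map_fst_run (us : seq {set 'I_n}) : map fst (run st us) = us.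
Proof.
elim/last_ind: us => [|us U IH] //.
by rewrite run_rcons map_rcons IH.
Qed.

Lemma size_run (us : seq {set 'I_n}) : size (run st us) = size us.
Proof. by rewrite -{2}(map_fst_run us) size_map. Qed.

Lemma take_run i (us : seq {set 'I_n}) : take i (run st us) = run st (take i us).
Proof.
have take_foldl h s : take (size h)
    (foldl (fun hist U => rcons hist (U, st n hist U)) h s) = h.
  elim: s h => [|x s IH] h /=; first by rewrite take_size.
  have := IH (rcons h (x, st n h x)); rewrite size_rcons => e.
  by rewrite -(take_takel _ (leqnSn (size h))) e -cats1 take_size_cat.
have [hi|hi] := leqP (size us) i; first by rewrite !take_oversize // size_run.
rewrite -{1}(cat_take_drop i us) /run foldl_cat.
by have := take_foldl (run st (take i us)) (drop i us); rewrite size_run size_take hi.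
Qed.

Lemma size_edges (us : seq {set 'I_n}) : size (edges st us) = size us.
Proof. by rewrite size_map size_run. Qed.

Lemma nth_edges_take i j (us : seq {set 'I_n}) : j < i ->
  nth set0 (edges st (take i us)) j = nth set0 (edges st us) j.
Proof. by move=> ji; rewrite /edges -take_run map_take nth_take. Qed.

Lemma nth_subset_edges i (us : seq {set 'I_n}) : i < size us ->
  nth set0 us i \subset nth set0 (edges st us) i.
Proof.
move=> hi; rewrite /edges (nth_map (set0, set0)) ?size_run //.
by rewrite -{1}(map_fst_run us) (nth_map (set0, set0)) ?size_run ?subsetUl.
Qed.

End Run.

Lemma card_bigcup_le (T I : finType) (P : pred I) (F : I -> {set T}) :
  #|\bigcup_(i | P i) F i| <= \sum_(i | P i) #|F i|.
Proof.
apply: (big_ind2 (fun (A : {set T}) k => #|A| <= k)); rewrite ?cards0 //.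
by move=> A1 k1 A2 k2 h1 h2; rewrite (leq_trans (leq_card_setU _ _)) ?leq_add.
Qed.

(* Adding the sets [G i], [i \in I], in increasing order of [i], every set after
   the first one brings at least [r - #|U i :&: previous sets|] new points. *)
Lemma card_bigcup_overlap_ge (T : finType) t (I : {set 'I_t}) (G U : 'I_t -> {set T})
    (r s : nat) :
  (forall i, i \in I -> [&& U i \subset G i, #|U i| == r & s <= #|G i|]) ->
  I != set0 ->
  r * #|I| + s <= #|\bigcup_(i in I) G i|
     + \sum_(i in I) #|U i :&: \bigcup_(j in I | j < i) G j| + r.
Proof.
move=> hI; pose J k := [set i in I | i < k].
suff prefix k : J k != set0 -> r * #|J k| + s <= #|\bigcup_(i in J k) G i|
     + \sum_(i in J k) #|U i :&: \bigcup_(j in I | j < i) G j| + r.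
  have IJ : I = J t by apply/setP => i; rewrite !inE ltn_ord andbT.
  by have := prefix t; rewrite -IJ.
elim: k => [|k IH]; first by case/set0Pn => i; rewrite !inE ltn0 andbF.
have [kt|tk] := ltnP k t; last first.
  have -> // : J k.+1 = J k.
  apply/setP => i; have ik := leq_trans (ltn_ord i) tk.
  by rewrite !inE ltnS ik ltnW.
pose i0 := Ordinal kt.
have JkS : J k.+1 = (if i0 \in I then i0 |: J k else J k).
  apply/setP => i; rewrite inE ltnS leq_eqVlt.
  have [-> | ne] := eqVneq i i0.
    by case: ifP => i0I; rewrite ?inE i0I /= ?eqxx ?ltnn.
  have ne' : (i == k :> nat) = false by apply: contraNF ne => /eqP e; apply/eqP/val_inj.
  by case: ifP => _; rewrite ?inE ne' ?(negbTE ne).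
case: ifP JkS => [i0I|_ ->] JkS; last exact: IH.
have i0J : i0 \notin J k by rewrite !inE ltnn andbF.
have prevE : \bigcup_(j in I | j < i0) G j = \bigcup_(j in J k) G j.
  by apply: eq_bigl => j; rewrite !inE.
rewrite JkS big_setU1 //= big_setU1 //= cardsU1 i0J prevE /= => _.
have /and3P[UG /eqP Ur sG] := hI i0 i0I.
have [-> | Jk0] := eqVneq (J k) set0.
  by rewrite !big_set0 cards0 setI0 cards0 setU0; lia.
have := IH Jk0; set X := \bigcup_(i in J k) G i; set S := \sum_(i in J k) _.
have newE : #|X| + r <= #|G i0 :|: X| + #|U i0 :&: X|.
  rewrite addnC -Ur -cardsUI leq_add2r.
  by apply/subset_leq_card/setSU.
rewrite mulnDr muln1; move: newE; set d := #|J k|; clearbody X S d; lia.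
Qed.

(* Steps are indexed by naturals, as in [sum_prod_adapted_le]. *)
Definition nat_in t (I : {set 'I_t}) (i : nat) : bool := [exists j in I, val j == i].

Lemma nat_in_ord t (I : {set 'I_t}) (i : 'I_t) : nat_in I i = (i \in I).
Proof.
apply/existsP/idP => [[j /andP[jI /eqP e]]|iI]; last by exists i; rewrite iI eqxx.
by have <- : j = i by apply: val_inj.
Qed.

(* Edges of size larger than [s] are discarded, so that the bounds below hold for
   every strategy, valid or not. *)
Definition prev_cover (st : strategy) n s t (I : {set 'I_t}) (i : nat)
    (p : seq {set 'I_n}) : {set 'I_n} :=
  \bigcup_(j in I | (j < i) && (#|nth set0 (edges st p) j| <= s)) nth set0 (edges st p) j.

Definition overlap_weight (st : strategy) n r s t (I : {set 'I_t}) (i : nat)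
    (p : seq {set 'I_n}) (U : {set 'I_n}) : nat :=
  (#|U| == r) * n ^ (if nat_in I i then #|U :&: prev_cover st s I i p| else 0).

Lemma card_prev_cover (st : strategy) n s t (I : {set 'I_t}) i (p : seq {set 'I_n}) :
  #|prev_cover st s I i p| <= #|I| * s.
Proof.
apply: (leq_trans (card_bigcup_le _ _)).
rewrite -sum_nat_const big_mkcondr /= leq_sum // => j _.
by case: ifP => // /andP[].
Qed.

Lemma sum_overlap_weight_le (st : strategy) n r s t (I : {set 'I_t}) i
    (p : seq {set 'I_n}) : r <= n ->
  \sum_(U : {set 'I_n}) overlap_weight st r s I i p U
   <= (if nat_in I i then r.+1 * 2 ^ (#|I| * s) * r ^ r else 1) * 'C(n, r).
Proof.
move=> rn; rewrite /overlap_weight; case: (nat_in I i).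
  apply: (leq_trans (sum_expn_card_setI_le _ rn)).
  rewrite leq_mul2r; apply/orP; right; rewrite leq_mul2r; apply/orP; right.
  by rewrite leq_mul2l leq_exp2l // card_prev_cover orbT.
under eq_bigr => U _ do rewrite expn0 muln1.
rewrite mul1n -[n in 'C(n, r)]card_ord -card_draws -sum1dep_card [X in _ <= X]big_mkcond.
by apply: leq_sum => U _; case: (#|U| == r).
Qed.

Lemma sum_prod_overlap_weight_le (st : strategy) n r s t (I : {set 'I_t}) : r <= n ->
  \sum_(us : t.-tuple {set 'I_n})
     \prod_(i < t) overlap_weight st r s I i (take i us) (nth set0 us i)
  <= (r.+1 * 2 ^ (#|I| * s) * r ^ r) ^ #|I| * 'C(n, r) ^ t.
Proof.
move=> rn; have := sum_prod_adapted_le set0 (fun i p => sum_overlap_weight_le st s I i p rn) t [::].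
move/leq_trans; apply; rewrite big_split /= prod_nat_const card_ord leq_mul2r.
rewrite -prod_nat_const (big_mkcond (fun i => i \in I)) /=.
by apply/orP; right; apply/eq_leq/eq_bigr => i _; rewrite nat_in_ord.
Qed.

Lemma exists_first_occurrences (T : finType) (x0 : T) t (G : seq T) (A : {set T}) :
  size G = t -> {subset A <= G} ->
  exists I : {set 'I_t}, #|I| = #|A| /\ forall i, i \in I -> nth x0 G i \in A.
Proof.
move=> sG AG; pose I := [set i : 'I_t | (nth x0 G i \in A) && (index (nth x0 G i) G == i)].
exists I; split=> [|i]; last by rewrite inE => /andP[].
rewrite -(@card_in_imset _ _ (fun i : 'I_t => nth x0 G i)); last first.
  move=> i j; rewrite !inE => /andP[_ /eqP hi] /andP[_ /eqP hj] e.
  by apply: val_inj; rewrite /= -hi -hj e.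
apply: eq_card => X; apply/imsetP/idP => [[i]|XA].
  by rewrite inE => /andP[? _] ->.
have XG := AG X XA; have Xt : index X G < t by rewrite -sG index_mem.
by exists (Ordinal Xt); rewrite ?inE /= nth_index ?XA ?eqxx.
Qed.

Lemma prod_overlap_weight_eq (st : strategy) n r s t (I : {set 'I_t})
    (us : t.-tuple {set 'I_n}) :
  [forall i : 'I_t, #|tnth us i| == r] ->
  (forall i, i \in I -> #|nth set0 (edges st us) i| <= s) ->
  \prod_(i < t) overlap_weight st r s I i (take i us) (nth set0 us i)
  = n ^ \sum_(i in I) #|nth set0 us i :&: \bigcup_(j in I | j < i) nth set0 (edges st us) j|.
Proof.
move=> /forallP us_r Is.
have us_r' (i : 'I_t) : #|nth set0 us i| == r by rewrite -tnth_nth us_r.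
under [LHS]eq_bigr => i _ do rewrite /overlap_weight us_r' mul1n.
rewrite -expn_sum; congr (n ^ _).
rewrite [RHS]big_mkcond /=; apply: eq_bigr => i _; rewrite nat_in_ord.
case: ifP => iI //; congr #|_ :&: _|.
apply: eq_big => j; last by case/andP => _ /andP[ji _]; rewrite nth_edges_take.
case jI: (j \in I) => //=; case ji: (j < i) => //=.
by rewrite nth_edges_take // Is.
Qed.

(* The first occurrences of the images of the edges of [F] span at most [f @: W]. *)
Lemma contains_overlap_sum_ge (st : strategy) r s v (E : {set {set 'I_v}})
    (W : {set 'I_v}) (F : {set {set 'I_v}}) n t (us : t.-tuple {set 'I_n}) :
  uniform s E -> subhg E W F -> 0 < #|F| ->
  [forall i : 'I_t, #|tnth us i| == r] -> contains E (edges st us) ->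
  exists I : {set 'I_t}, [/\ #|I| = #|F|,
    forall i, i \in I -> #|nth set0 (edges st us) i| = s &
    (s + r * #|F|) - (r + #|W|) <= \sum_(i in I)
      #|nth set0 us i :&: \bigcup_(j in I | j < i) nth set0 (edges st us) j|].
Proof.
move=> unif /andP[FE /forallP FW] F_gt0 /forallP us_r.
move=> /existsP[f /andP[/injectiveP f_inj /forallP fE]].
set G := edges st us; set Im := (fun e : {set 'I_v} => f @: e) @: F.
have ImG X : X \in Im -> X \in G.
  by case/imsetP=> e eF ->; have := fE e; rewrite (subsetP FE _ eF); apply.
have ImS X : X \in Im -> #|X| = s.
  by case/imsetP=> e eF ->; rewrite card_imset // unif // (subsetP FE _ eF).
have ImW X : X \in Im -> X \subset f @: W.
  by case/imsetP=> e eF ->; apply: imsetS; have := FW e; rewrite eF; apply.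
have sG : size G = t by rewrite size_edges size_tuple.
have [I [cardI IIm]] := exists_first_occurrences set0 sG ImG.
have {}cardI : #|I| = #|F| by rewrite cardI card_in_imset // => e e' _ _; apply: imset_inj.
exists I; split=> // [i /IIm /ImS //|].
have hI i : i \in I ->
    [&& nth set0 us i \subset nth set0 G i, #|nth set0 us i| == r & s <= #|nth set0 G i|].
  move=> /IIm iIm; rewrite nth_subset_edges ?size_tuple ?ltn_ord //= -(tnth_nth set0) us_r.
  by rewrite /= (ImS _ iIm).
have I_gt0 : I != set0 by rewrite -card_gt0 cardI.
have := card_bigcup_overlap_ge hI I_gt0; rewrite cardI.
have cover_W : #|\bigcup_(i in I) nth set0 G i| <= #|W|.
  apply: leq_trans (leq_imset_card f W); apply/subset_leq_card/bigcupsP => i /IIm.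
  exact: ImW.
move: cover_W; set S := \sum_(i in I) _; set B := #|\bigcup_(i in I) _|.
clearbody S B; lia.
Qed.

Lemma card_containing_tuples_le (st : strategy) r s v (E : {set {set 'I_v}})
    (W : {set 'I_v}) (F : {set {set 'I_v}}) n t :
  0 < n -> r <= n -> uniform s E -> subhg E W F -> 0 < #|F| ->
  n ^ ((s + r * #|F|) - (r + #|W|)) *
  #|[set us : t.-tuple {set 'I_n} |
       [forall i : 'I_t, #|tnth us i| == r] && contains E (edges st us)]|
   <= 'C(t, #|F|) * ((r.+1 * 2 ^ (#|F| * s) * r ^ r) ^ #|F| * 'C(n, r) ^ t).
Proof.
move=> n_gt0 rn unif sub F_gt0.
pose wsum (us : t.-tuple {set 'I_n}) := \sum_(I : {set 'I_t} | #|I| == #|F|)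
  \prod_(i < t) overlap_weight st r s I i (take i us) (nth set0 us i).
rewrite -sum1dep_card big_distrr /= (@leq_trans (\sum_(us : t.-tuple {set 'I_n}) wsum us)) //.
  rewrite [X in X <= _]big_mkcond /=; apply: leq_sum => us _.
  case: ifP => // /andP[us_r cont]; rewrite muln1.
  have [I [cardI Is sum_ge]] := contains_overlap_sum_ge unif sub F_gt0 us_r cont.
  rewrite /wsum (bigD1 I) /= ?cardI // prod_overlap_weight_eq // => [|i /Is -> //].
  exact: leq_trans (leq_pexp2l n_gt0 sum_ge) (leq_addr _ _).
rewrite exchange_big /= (@leq_trans (\sum_(I : {set 'I_t} | #|I| == #|F|)
   ((r.+1 * 2 ^ (#|F| * s) * r ^ r) ^ #|F| * 'C(n, r) ^ t))) //.
  by apply: leq_sum => I /eqP <-; apply: sum_prod_overlap_weight_le.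
rewrite big_const iter_addn addn0 mulnC leq_mul2r; apply/orP; right.
by rewrite -[X in 'C(X, _)](card_ord t) -card_draws; apply/eq_leq/eq_card => I; rewrite inE.
Qed.

From mathcomp Require Import all_classical all_reals all_analysis.

Import Order.TTheory GRing.Theory Num.Theory.
Import numFieldNormedType.Exports.
Local Open Scope ring_scope.

Section Mu.
Variables (R : realType) (r s v : nat) (E : {set {set 'I_v}}).

Lemma fr_ge0 (W : {set 'I_v}) (F : {set {set 'I_v}}) : 0 <= fr R r s W F.
Proof. by rewrite /fr divr_ge0. Qed.

Lemma mu_attained : (s <= v)%N ->
  exists (W : {set 'I_v}) (F : {set {set 'I_v}}),
    [/\ (s <= #|W|)%N, subhg E W F & mu R r s E = fr R r s W F].
Proof.
move=> sv; have sT : (s <= #|[set: 'I_v]|)%N by rewrite cardsT card_ord.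
pose inner W := \big[Num.max/0]_(F : {set {set 'I_v}} | subhg E W F) fr R r s W F.
have -> : mu R r s E = \big[Num.max/0]_(W : {set 'I_v} | (s <= #|W|)%N) inner W by [].
have [W sW ->] := eq_bigmax _ (fun W : {set 'I_v} => s <= #|W|)%N inner sT
  (fun W _ => bigmax_ge_id _ _ _ _).
have sub0 : subhg E W finset.set0.
  by rewrite /subhg finset.sub0set; apply/forallP => e; rewrite finset.in_set0.
rewrite /inner.
have [F subF ->] := eq_bigmax _ (subhg E W) (fr R r s W) sub0 (fun F _ => fr_ge0 W F).
by exists W, F.
Qed.

Lemma mu_gt0 : (1 <= r)%N -> (s <= v)%N -> (0 < #|E|)%N -> 0 < mu R r s E.
Proof.
move=> r1 sv E_gt0.
have subT : subhg E [set: 'I_v] E.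
  by rewrite /subhg subxx; apply/forallP => e; rewrite finset.subsetT implybT.
have frT : 0 < fr R r s [set: 'I_v] E by rewrite /fr divr_gt0 // ltr0n // cardsT card_ord; lia.
apply: (lt_le_trans frT); apply: le_trans (le_bigmax_cond _ _ subT) _.
by apply: le_bigmax_cond; rewrite cardsT card_ord.
Qed.

End Mu.

Lemma prob_avoid_complement (R : realType) r (st : strategy) v (E : {set {set 'I_v}}) n t :
  (r <= n)%N ->
  prob_avoid R r st E n t = 1 -
    #|[set us : t.-tuple {set 'I_n} |
        [forall i : 'I_t, #|tnth us i| == r] && contains E (edges st us)]|%:R
    / ('C(n, r) ^ t)%:R.
Proof.
move=> rn; have C_neq0 : (('C(n, r) ^ t)%:R : R) != 0.
  by rewrite pnatr_eq0 -lt0n expn_gt0 bin_gt0 rn.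
have split := card_predI_predC (fun us : t.-tuple {set 'I_n} =>
  [forall i : 'I_t, #|tnth us i| == r]) (fun us => contains E (edges st us)).
rewrite card_tuples_of_card in split.
rewrite /prob_avoid -[X in X - _](divff C_neq0) -mulrBl; congr (_ / _).
by rewrite -split natrD addrK.
Qed.

Lemma prob_avoid_le1 (R : realType) r (st : strategy) v (E : {set {set 'I_v}}) n t :
  (r <= n)%N -> prob_avoid R r st E n t <= 1.
Proof. by move=> rn; rewrite prob_avoid_complement // lerBlDr lerDl divr_ge0. Qed.

Lemma expn_div_le_powR (R : realType) (T : R) (n m K d r : nat) :
  0 <= T -> (0 < n)%N -> (0 < m)%N -> (r * m <= K + d)%N ->
  T ^+ m / n%:R ^+ K <= (T / n%:R `^ (r%:R - d%:R / m%:R)) ^+ m.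
Proof.
move=> T_ge0 n_gt0 m_gt0 rmKd; have n_gt0' : (0 : R) < n%:R by rewrite ltr0n.
have powE : n%:R `^ (r%:R - d%:R / m%:R) ^+ m = n%:R `^ ((r * m)%:R - d%:R) :> R.
  rewrite -powR_mulrn ?powR_ge0 // -powRrM mulrBl natrM -mulrA mulVf ?mulr1 //.
  by rewrite pnatr_eq0 -lt0n.
rewrite exprMn exprVn powE ler_wpM2l ?exprn_ge0 // lef_pV2 ?posrE ?powR_gt0 ?exprn_gt0 //.
rewrite -powR_mulrn ?ler0n //; apply: ler_powR; first by rewrite ler1n.
by rewrite lerBlDr -natrD ler_nat.
Qed.

Lemma prob_avoid_ge (R : realType) (st : strategy) r s v (E : {set {set 'I_v}})
    (W : {set 'I_v}) (F : {set {set 'I_v}}) n t :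
  (r <= s)%N -> (s <= n)%N -> (0 < n)%N -> uniform s E -> subhg E W F -> (0 < #|F|)%N ->
  1 - ((r.+1 * 2 ^ (#|F| * s) * r ^ r) ^ #|F|)%:R *
      ((t%:R : R) / n%:R `^ (r%:R - (fr R r s W F)^-1)) ^+ #|F|
    <= prob_avoid R r st E n t.
Proof.
move=> rs sn n_gt0 unif sub m_gt0; rewrite /fr invf_div.
have rn := leq_trans rs sn; rewrite prob_avoid_complement // lerD2l lerN2.
have C_gt0 : (0 : R) < ('C(n, r) ^ t)%:R by rewrite ltr0n expn_gt0 bin_gt0 rn.
have bad := card_containing_tuples_le st t n_gt0 rn unif sub m_gt0.
set K := ((s + r * #|F|) - (r + #|W|))%N in bad.
apply: (@le_trans _ _ (((r.+1 * 2 ^ (#|F| * s) * r ^ r) ^ #|F|)%:R *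
                       (t%:R ^+ #|F| / n%:R ^+ K))); last first.
  by apply: ler_wpM2l => //; apply: expn_div_le_powR => //; rewrite /K; lia.
rewrite ler_pdivrMr // mulrA mulrAC ler_pdivlMr ?exprn_gt0 ?ltr0n // -!natrX -!natrM ler_nat.
rewrite mulnC (leq_trans bad) // mulnCA -[X in (_ <= X)%N]mulnA.
by rewrite leq_mul2l leq_mul2r bin_le_expn !orbT.
Qed.

Local Open Scope classical_set_scope.

Theorem corollary3 (R : realType) (r s v : nat) (E : {set {set 'I_v}}) :
  (1 <= r)%N -> (r <= s)%N -> (s <= v)%N -> uniform s E -> (0 < #|E|)%N ->
  @tau_ge R r s v E (fun n => n%:R `^ (r%:R - (mu R r s E)^-1)).
Proof.
move=> r1 rs sv unif E_gt0 st _ t t_small.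
have [W [F [_ sub muE]]] := mu_attained R r E sv.
have m_gt0 : (0 < #|F|)%N.
  by rewrite lt0n; apply: contraTneq (mu_gt0 R r1 sv E_gt0) => m0; rewrite muE /fr m0 mul0r ltxx.
set g := fun n => (t n)%:R / n%:R `^ (r%:R - (fr R r s W F)^-1) : R.
have g0 : g @ \oo --> 0 by rewrite /g -muE.
have gm0 : (fun n => g n ^+ #|F|) @ \oo --> 0.
  by have := cvg_comp _ _ g0 (@exprn_continuous R #|F| 0); rewrite expr0n gtn_eqF.
set K0 := ((r.+1 * 2 ^ (#|F| * s) * r ^ r) ^ #|F|)%N.
have lower : (fun n => 1 - K0%:R * g n ^+ #|F|) @ \oo --> (1 : R).
  rewrite -[X in _ --> X]subr0 -(mulr0 K0%:R).
  by apply: cvgB; [exact: cvg_cst | apply: cvgM; [exact: cvg_cst | exact: gm0]].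
apply: (squeeze_cvgr _ lower (cvg_cst (1 : R))).
near=> n; have sn : (s <= n)%N by near: n; apply: nbhs_infty_ge.
have n_gt0 : (0 < n)%N := leq_trans r1 (leq_trans rs sn).
by rewrite prob_avoid_ge // prob_avoid_le1 // (leq_trans rs).
Unshelve. all: end_near.
Qed.
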